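(* Let $G$ be a locally compact group. For every neighborhood $U$ of the unit and every compact $C\subseteq G$ there exist a finite set $F\subseteq G$ and a family of subsets $\{A_{g,h}\subseteq F: g,h\in F\}$ such that: (1) $C\subseteq FU$; (2) if $g,h\in C\cap F$ then $A_{g,h}\subseteq ghU$; (3) for every $g\in F$ and every $S\subseteq F$, $\left|\bigcup_{h\in S}A_{g,h}\right|\geq|S|$.
   Context: For $X,Y\subseteq G$, $XY=\{xy:x\in X,y\in Y\}$ and $gX=\{gx:x\in X\}$. *)

From HB Require Import structures.
From mathcomp Require Import all_boot all_order all_algebra.
From mathcomp Require Import finmap.
From mathcomp Require Import boolp classical_sets topology.
Set Implicit Arguments. Unset Strict Implicit. Unset Printing Implicit Defensive.
Local Open Scope classical_set_scope.

Definition is_topological_group (T : topologicalType)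
    (mul : T -> T -> T) (inv : T -> T) (one : T) : Prop :=
  [/\ (forall x y z, mul x (mul y z) = mul (mul x y) z),
      (forall x, mul one x = x /\ mul x one = x),
      (forall x, mul (inv x) x = one /\ mul x (inv x) = one),
      continuous (fun p : T * T => mul p.1 p.2) &
      continuous inv].

Definition is_locally_compact_group (T : topologicalType)
    (mul : T -> T -> T) (inv : T -> T) (one : T) : Prop :=
  [/\ is_topological_group mul inv one, hausdorff_space T &
      locally_compact [set: T]].

Definition setmul (T : Type) (mul : T -> T -> T) (X Y : set T) : set T :=
  [set z | exists x y, X x /\ Y y /\ z = mul x y].

Definition lmulset (T : Type) (mul : T -> T -> T) (g : T) (X : set T) : set T :=
  [set z | exists x, X x /\ z = mul g x].

(** Choose a neighbourhood [V] of the unit with [V V^-1 ⊆ U] inside a compact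
    neighbourhood [D], and a set [F] of least cardinality with
    [C ∪ C C D ⊆ F V] (it exists because [C ∪ C C D] is compact).  Put
    [A_{g,h} := F ∩ g h U] when [g, h ∈ C] and [A_{g,h} := F] otherwise.  If
    [S ⊆ F] lies in [C] and [X] is the union of the [A_{g,h}], [h ∈ S], then
    replacing [S] by [g^-1 X] in [F] still gives a cover: for [x = f v] with
    [f ∈ S], write [g f v = f' v'] with [f' ∈ F]; then
    [f' ∈ g f V V^-1 ⊆ g f U], so [f' ∈ X] and [x = (g^-1 f') v'].
    Minimality of [F] then yields [|S| ≤ |X|]. *)

From HB Require Import structures.
From mathcomp Require Import all_boot all_order all_algebra.
From mathcomp Require Import finmap.
From mathcomp Require Import boolp classical_sets topology.
From mathcomp Require Import zify.
Set Implicit Arguments. Unset Strict Implicit. Unset Printing Implicit Defensive.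
Local Open Scope classical_set_scope.
Local Open Scope fset_scope.

Lemma ex_card_min_fset (T : choiceType) (P : {fset T} -> Prop) :
  (exists F, P F) -> exists F, P F /\ forall F', P F' -> (#|` F| <= #|` F'|)%N.
Proof.
move=> [F0 PF0].
have exn : exists n, `[< exists F, #|` F| = n /\ P F >].
  by exists #|` F0|; apply/asboolP; exists F0.
case: (ex_minnP exn) => n /asboolP [F [<- PF]] minF.
by exists F; split => // F' PF'; apply: minF; apply/asboolP; exists F'.
Qed.

Section GroupLaws.
Variables (G : Type) (mul : G -> G -> G) (inv : G -> G) (one : G).
Hypotheses (mulA : forall x y z, mul x (mul y z) = mul (mul x y) z)
  (mul1g : forall x, mul one x = x) (mulg1 : forall x, mul x one = x)
  (mulVg : forall x, mul (inv x) x = one) (mulgV : forall x, mul x (inv x) = one).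

Lemma invg1 : inv one = one.
Proof. by rewrite -[inv one]mulg1 mulVg. Qed.

Lemma mulKg x y : mul (inv x) (mul x y) = y.
Proof. by rewrite mulA mulVg mul1g. Qed.

Lemma mulKVg x y : mul x (mul (inv x) y) = y.
Proof. by rewrite mulA mulgV mul1g. Qed.

Lemma mulgK x y : mul (mul x y) (inv y) = x.
Proof. by rewrite -mulA mulgV mulg1. Qed.

Lemma mulg_inj x : injective (mul x).
Proof. by move=> y z /(congr1 (mul (inv x))); rewrite !mulKg. Qed.

End GroupLaws.

Section TranslateCovers.
Variables (G : choiceType) (mul : G -> G -> G) (inv : G -> G) (one : G).
Hypotheses (mulA : forall x y z, mul x (mul y z) = mul (mul x y) z)
  (mul1g : forall x, mul one x = x) (mulg1 : forall x, mul x one = x)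
  (mulVg : forall x, mul (inv x) x = one) (mulgV : forall x, mul x (inv x) = one).

Variables U V C K : set G.
Hypotheses (divV_subset_U : forall v w, V v -> V w -> U (mul v (inv w)))
  (V1 : V one) (CK : (C `<=` K)%classic)
  (CCV_K : forall a b v, C a -> C b -> V v -> K (mul (mul a b) v)).

Lemma V_subset_U : (V `<=` U)%classic.
Proof.
by move=> v Vv; have := divV_subset_U Vv V1; rewrite (invg1 mulg1 mulVg) mulg1.
Qed.

Definition close_in (F : {fset G}) (a : G) : {fset G} :=
  [fset f in F | `[< lmulset mul a U f >]].

Definition hall_family (F : {fset G}) (g h : G) : {fset G} :=
  if `[< C g /\ C h >] then close_in F (mul g h) else F.

Lemma cover_exchange (F S X : {fset G}) (g : G) :
  (K `<=` setmul mul [set x | x \in F] V)%classic ->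
  (forall h, h \in S -> C g /\ C h) ->
  (forall h, h \in S -> close_in F (mul g h) `<=` X) ->
  let F' := F `\` S `|` [fset mul (inv g) f | f in X] in
  (K `<=` setmul mul [set x | x \in F'] V)%classic.
Proof.
move=> KF CgS SX F' x /[dup] Kx /KF [f [v [Ff [Vv ->]]]].
have [fS|fNS] := boolP (f \in S); last first.
  by exists f, v; split => //; rewrite /= in_fsetU in_fsetD fNS Ff.
have [f' [v' [Ff' [Vv' e]]]] := KF _ (CCV_K (CgS f fS).1 (CgS f fS).2 Vv).
have Xf' : f' \in X.
  apply: (fsubsetP (SX f fS)); rewrite in_fset inE /= Ff'; apply/asboolP.
  exists (mul v (inv v')); split; first exact: divV_subset_U.
  by rewrite mulA e (mulgK mulA mulg1 mulgV).
exists (mul (inv g) f'), v'; split.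
  by rewrite /= in_fsetU; apply/orP; right; apply/imfsetP; exists f'.
by split => //; rewrite -mulA -e -mulA (mulKg mulA mul1g mulVg).
Qed.

Lemma hall_family_card (F : {fset G}) :
  (K `<=` setmul mul [set x | x \in F] V)%classic ->
  (forall F', (K `<=` setmul mul [set x | x \in F'] V)%classic ->
     (#|` F| <= #|` F'|)%N) ->
  forall g (S : {fset G}), S `<=` F ->
    (#|` S| <= #|` \bigcup_(h <- S) hall_family F g h|)%N.
Proof.
move=> KF minF g S SF; set X := \bigcup_(h <- S) hall_family F g h.
have [[h hS nCgh]|allC] := pselect (exists2 h, h \in S & ~ (C g /\ C h)).
  have FX : F `<=` X.
    have := bigfcup_sup (hall_family F g) hS isT.
    by rewrite {1}/hall_family; case: ifPn => [/asboolP //|_].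
  exact: (fsubset_leq_card (fsubset_trans SF FX)).
have CgS h : h \in S -> C g /\ C h.
  by move=> hS; apply: contrapT => nC; apply: allC; exists h.
have SX h : h \in S -> close_in F (mul g h) `<=` X.
  move=> hS; have := bigfcup_sup (hall_family F g) hS isT.
  by rewrite /hall_family (asboolT (CgS h hS)).
have := minF _ (cover_exchange KF CgS SX).
have cardgX : #|` [fset mul (inv g) f | f in X]| = #|` X|.
  by apply: card_imfset; exact: (mulg_inj mulA mul1g mulVg).
have [+ _] := leq_card_fsetU (F `\` S) [fset mul (inv g) f | f in X].
rewrite cardgX cardfsDS //.
have := fsubset_leq_card SF; lia.
Qed.

Lemma translate_cover_hall :
  (exists F0 : {fset G}, (K `<=` setmul mul [set x | x \in F0] V)%classic) ->
  exists (F : {fset G}) (A : G -> G -> {fset G}),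
    (forall g h, g \in F -> h \in F -> A g h `<=` F) /\
    (C `<=` setmul mul [set x | x \in F] U)%classic /\
    (forall g h, C g -> g \in F -> C h -> h \in F ->
       ([set x | x \in A g h] `<=` lmulset mul (mul g h) U)%classic) /\
    (forall g (S : {fset G}), g \in F -> S `<=` F ->
       (#|` S | <= #|` \bigcup_(h <- S) A g h |)%N).
Proof.
move=> /ex_card_min_fset [F [KF minF]].
exists F, (hall_family F); split; [|split; [|split]].
- move=> g h _ _; rewrite /hall_family; case: ifP => _ //.
  exact: fset_sub.
- move=> c /CK /KF [f [v [Ff [Vv ->]]]].
  by exists f, v; split => //; split => //; exact: V_subset_U.
- move=> g h Cg _ Ch _ x; rewrite /hall_family (asboolT (conj Cg Ch)).
  by rewrite /= in_fset /= => /andP [_ /asboolP].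
- by move=> g S _; exact: hall_family_card.
Qed.

End TranslateCovers.

(* [compact_cover] is only stated for pointed spaces. *)
Definition pointed_at (T : Type) (x : T) := T.
HB.instance Definition _ (T : topologicalType) (x : T) :=
  Topological.on (pointed_at x).
HB.instance Definition _ (T : topologicalType) (x : T) :=
  isPointed.Build (pointed_at x) x.

Lemma compact_cover_compact (T : topologicalType) (x : T) (A : set T) :
  compact A -> cover_compact A.
Proof.
move=> cA; have e := congr1 (fun P => P A) (@compact_cover (pointed_at x)).
by have : @cover_compact (pointed_at x) A by rewrite -e.
Qed.

Section TopologicalGroup.
Variables (G : topologicalType) (mul : G -> G -> G) (inv : G -> G) (one : G).
Hypotheses (mulA : forall x y z, mul x (mul y z) = mul (mul x y) z)
  (mul1g : forall x, mul one x = x) (mulg1 : forall x, mul x one = x)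
  (mulVg : forall x, mul (inv x) x = one) (mulgV : forall x, mul x (inv x) = one)
  (mul_cont : continuous (fun p : G * G => mul p.1 p.2)) (inv_cont : continuous inv).

Lemma nbhs1_div_sub (U : set G) : nbhs one U ->
  exists2 V, nbhs one V & forall v w, V v -> V w -> U (mul v (inv w)).
Proof.
move=> U1.
have div_cont : {for (one, one), continuous (fun p : G * G => mul p.1 (inv p.2))}.
  apply: (@continuous_comp _ _ _ (fun p : G * G => (p.1, inv p.2))
    (fun p => mul p.1 p.2)); last exact: mul_cont.
  apply: cvg_pair; first exact: cvg_fst.
  apply: (@continuous_comp _ _ _ snd inv); [exact: cvg_snd | exact: inv_cont].
have : nbhs (one, one) [set p : G * G | U (mul p.1 (inv p.2))].
  by apply: div_cont; rewrite /= (invg1 mulg1 mulVg) mul1g.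
case=> [[A B] /= [A1 B1] ABU].
exists (A `&` B)%classic; first exact: filterI.
by move=> v w [Av _] [_ Bw]; exact: (ABU (v, w)).
Qed.

Lemma compact_setmul (A B : set G) :
  compact A -> compact B -> compact (setmul mul A B).
Proof.
move=> cA cB.
have -> : setmul mul A B = ((fun p : G * G => mul p.1 p.2) @` (A `*` B))%classic.
  apply/seteqP; split => [z [x [y [Ax [By ->]]]]|_ [[x y] [Ax By] <-]].
    by exists (x, y).
  by exists x, y.
apply: continuous_compact; first exact: continuous_subspaceT.
exact: compact_setX.
Qed.

Lemma compact_translate_cover (K V : set G) : compact K -> nbhs one V ->
  exists F0 : {fset G}, (K `<=` setmul mul [set x | x \in F0] V)%classic.
Proof.
move=> cK V1.
pose O y := [set z | V° (mul (inv y) z)].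
have oO y : [set: G] y -> open (O y).
  move=> _; apply: open_comp; last exact: open_interior.
  move=> z _; apply: (@continuous_comp _ _ _ (fun z : G => (inv y, z))
    (fun p => mul p.1 p.2)); last exact: mul_cont.
  by apply: cvg_pair; [exact: cvg_cst | exact: cvg_id].
have KO : (K `<=` cover [set: G] O)%classic.
  move=> z _; exists z => //; rewrite /O /= mulVg.
  by apply: nbhs_singleton; apply: nbhs_interior.
have [F0 _ KF0] := compact_cover_compact one cK oO KO.
exists F0 => z /KF0 [y F0y Oyz]; exists y, (mul (inv y) z).
split => //; split; first exact: interior_subset.
by rewrite (mulKVg mulA mul1g mulgV).
Qed.

End TopologicalGroup.

Theorem lemma1 (G : topologicalType) (mul : G -> G -> G) (inv : G -> G) (one : G)
  (hG : is_locally_compact_group mul inv one)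
  (U : set G) (hU : nbhs one U) (C : set G) (hC : compact C) :
  exists (F : {fset G}) (A : G -> G -> {fset G}),
    (forall g h, g \in F -> h \in F -> A g h `<=` F) /\
    (C `<=` setmul mul [set x | x \in F] U)%classic /\
    (forall g h, C g -> g \in F -> C h -> h \in F ->
       ([set x | x \in A g h] `<=` lmulset mul (mul g h) U)%classic) /\
    (forall g (S : {fset G}), g \in F -> S `<=` F ->
       (#|` S | <= #|` \bigcup_(h <- S) A g h |)%N).
Proof.
case: hG => [[mulA mul1 mulV mul_cont inv_cont] _ G_lc].
have mul1g x : mul one x = x by case: (mul1 x).
have mulg1 x : mul x one = x by case: (mul1 x).
have mulVg x : mul (inv x) x = one by case: (mulV x).
have mulgV x : mul x (inv x) = one by case: (mulV x).
have [V0 V01 V0U] := nbhs1_div_sub mul1g mulg1 mulVg mul_cont inv_cont hU.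
have [D D1 [cD _]] := G_lc one I; rewrite withinET in D1.
pose V := (V0 `&` D)%classic.
have V1 : nbhs one V by exact: filterI.
pose K := (C `|` setmul mul (setmul mul C C) D)%classic.
have cK : compact K.
  by apply: compactU => //; do 2 apply: compact_setmul => //.
apply: (translate_cover_hall mulA mul1g mulg1 mulVg mulgV (V := V) (K := K)).
- by move=> v w [V0v _] [V0w _]; exact: V0U.
- exact: nbhs_singleton.
- by move=> c Cc; left.
- move=> a b v Ca Cb [_ Dv]; right; exists (mul a b), v.
  by split; [exists a, b | split].
- exact: compact_translate_cover mulA mul1g mulVg mulgV mul_cont _ _ cK V1.
Qed.
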